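(* Let $\bar p$ be any maximizer of $p\mapsto\min_{k\in\mathcal K}\mathrm{SIR}_k(p)/\gamma_k$ over $\mathcal P$ (equivalently over $\{p\ge0:\max_{n\in\mathcal N}g_n(p)\le1\}$). Then (i) $\max_{n\in\mathcal N}g_n(\bar p)=1$; (ii) if $V$ is irreducible, then $\bar p$ is unique and there is $\beta>0$ with $\gamma_k/\mathrm{SIR}_k(\bar p)=\beta$ for all $k\in\mathcal K$.
   Context: Network model: $K\ge 2$ links, $\mathcal K=\{1,\dots,K\}$. Power constraint set $\mathcal P=\{p\in\mathbb R_+^K: Cp\le\hat p\}$, where $C\in\{0,1\}^{N\times K}$ has at least one entry equal to $1$ in each column and $\hat p=(P_1,\dots,P_N)\in\mathbb R_{++}^N$; $\mathcal N=\{1,\dots,N\}$; $c_n\in\{0,1\}^K$ is the $n$-th row of $C$ (as a column vector) and $g_n(p)=c_n^Tp/P_n$. Gain matrix $V\in\mathbb R_+^{K\times K}$ with zero diagonal, noise vector $z\in\mathbb R_{++}^K$, $\mathrm{SIR}_k(p)=p_k/((Vp)_k+z_k)$. SIR targets $\gamma_1,\dots,\gamma_K>0$. *)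

From HB Require Import structures.
From mathcomp Require Import all_boot all_order all_algebra.
Set Implicit Arguments. Unset Strict Implicit. Unset Printing Implicit Defensive.
Import Order.TTheory GRing.Theory Num.Theory.
Local Open Scope ring_scope.

Section Defs.
Variable R : rcfType.

Definition minI (m : nat) (f : 'I_m -> R) : R :=
  if [pick i : 'I_m] is Some i0 then \big[Num.min/f i0]_(i < m) f i else 0.
Definition maxI (m : nat) (f : 'I_m -> R) : R :=
  if [pick i : 'I_m] is Some i0 then \big[Num.max/f i0]_(i < m) f i else 0.

Definition SIR (K : nat) (V : 'M[R]_K) (z p : 'cV[R]_K) (k : 'I_K) : R :=
  p k 0 / ((V *m p) k 0 + z k 0).

Definition gfun (N K : nat) (C : 'M[R]_(N, K)) (phat : 'cV[R]_N)
  (p : 'cV[R]_K) (n : 'I_N) : R := (C *m p) n 0 / phat n 0.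

Definition feasible (N K : nat) (C : 'M[R]_(N, K)) (phat : 'cV[R]_N)
  (p : 'cV[R]_K) : Prop :=
  (forall k, 0 <= p k 0) /\ (forall n, (C *m p) n 0 <= phat n 0).

Definition objective (K : nat) (V : 'M[R]_K) (z gamma p : 'cV[R]_K) : R :=
  minI (fun k => SIR V z p k / gamma k 0).

Definition maximizer (N K : nat) (C : 'M[R]_(N, K)) (phat : 'cV[R]_N)
  (V : 'M[R]_K) (z gamma p : 'cV[R]_K) : Prop :=
  feasible C phat p /\
  forall q, feasible C phat q -> objective V z gamma q <= objective V z gamma p.

Definition irreducible (K : nat) (V : 'M[R]_K) : Prop :=
  forall i j : 'I_K, connect (fun a b : 'I_K => 0 < V a b) i j.
End Defs.

From HB Require Import structures.
From mathcomp Require Import all_boot all_order all_algebra.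
Set Implicit Arguments. Unset Strict Implicit. Unset Printing Implicit Defensive.
Import Order.TTheory GRing.Theory Num.Theory.
Local Open Scope ring_scope.

(* For a level t > 0, the power that link k needs to reach SIR_k / gamma_k = t
   against the interference created by p is  demand t p k = t gamma_k I_k(p),
   with I_k(p) = (V p)_k + z_k; so "t <= SIR_k(p) / gamma_k" reads
   demand t p k <= p k.  The equal-power vector min_n P_n / K is feasible,
   hence the optimal value t of a maximizer p is positive, p achieves level t,
   and every p k >= demand t p k > 0.
   (i)  Scaling p by c > 1 strictly raises every SIR because the noise does not
        scale (strict subhomogeneity of I); so if every constraint g_n had
        slack, a scaled copy of p would be feasible and strictly better.
   (ii) If V is irreducible, the averaging map p |-> (demand t p + p) / 2
        keeps level t achieved, only lowers powers, and propagates slack at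
        link j to every link k with V k j > 0.  Iterating along the paths of
        the digraph of V gives slack everywhere, which would beat the optimum;
        hence a maximizer is a fixed point of demand t ("balanced"), so that
        gamma_k / SIR_k = 1 / t for all k.  Two balanced vectors at the same
        level are ordered both ways by a ratio argument: uniqueness. *)

Lemma expansion_factor (R : numFieldType) (M : R) :
  0 <= M -> M < 1 -> exists2 c, 1 < c & c * M <= 1.
Proof.
move=> M_ge0 M_lt1; have den_gt0 : 0 < 1 + M by rewrite ltr_pwDl.
exists (2 / (1 + M)); first by rewrite ltr_pdivlMr // mul1r -[2]/(1 + 1) ltrD2l.
by rewrite mulrAC ler_pdivrMr // mul1r mulr_natl mulr2n lerD2r ltW.
Qed.

Section FiniteExtrema.
Variable R : rcfType.

Lemma minI_le m (f : 'I_m -> R) k : minI f <= f k.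
Proof. by rewrite /minI; case: pickP => [i0 _|/(_ k)//]; apply: bigmin_le. Qed.

(* The index i only witnesses that the family is nonempty. *)
Lemma minI_gt m (f : 'I_m -> R) t (i : 'I_m) :
  (forall k, t < f k) -> t < minI f.
Proof.
by move=> ltf; rewrite /minI; case: pickP => [i0 _|/(_ i)//]; apply: lt_bigmin.
Qed.

Lemma maxI_ge m (f : 'I_m -> R) k : f k <= maxI f.
Proof. by rewrite /maxI; case: pickP => [i0 _|/(_ k)//]; apply: le_bigmax. Qed.

Lemma maxI_attained m (f : 'I_m -> R) (i : 'I_m) : exists k, maxI f = f k.
Proof.
rewrite /maxI; case: pickP => [i0 _|/(_ i)//].
apply: (big_ind (fun x => exists k, x = f k)); first by exists i0.
  by move=> _ _ [k ->] [l ->]; case: (leP (f k) (f l)) => _; [exists l | exists k].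
by move=> k _; exists k.
Qed.

End FiniteExtrema.

Section NonnegativeMatrices.
Variables (R : numDomainType) (m K : nat) (A : 'M[R]_(m, K)).
Hypothesis A_ge0 : forall i j, 0 <= A i j.

Lemma mulmx_ge0 (p : 'cV[R]_K) i : (forall j, 0 <= p j 0) -> 0 <= (A *m p) i 0.
Proof. by move=> p_ge0; rewrite mxE; apply: sumr_ge0 => j _; apply: mulr_ge0. Qed.

Lemma mulmx_le (p q : 'cV[R]_K) i :
  (forall j, p j 0 <= q j 0) -> (A *m p) i 0 <= (A *m q) i 0.
Proof. by move=> lepq; rewrite !mxE; apply: ler_sum => j _; apply: ler_wpM2l. Qed.

Lemma mulmx_lt (p q : 'cV[R]_K) i j :
  (forall j, p j 0 <= q j 0) -> p j 0 < q j 0 -> 0 < A i j ->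
  (A *m p) i 0 < (A *m q) i 0.
Proof.
move=> lepq ltj Aij_gt0; rewrite !mxE (bigD1 j) //= [X in _ < X](bigD1 j) //=.
by rewrite ltr_leD ?ltr_pM2l //; apply: ler_sum => k _; apply: ler_wpM2l.
Qed.

End NonnegativeMatrices.

Section Interference.
Variables (R : rcfType) (K : nat) (V : 'M[R]_K) (z gamma : 'cV[R]_K).
Hypothesis V_ge0 : forall i j, 0 <= V i j.
Hypothesis z_gt0 : forall k, 0 < z k 0.
Hypothesis gamma_gt0 : forall k, 0 < gamma k 0.

Definition nonneg (p : 'cV[R]_K) := forall j, 0 <= p j 0.

Definition interf (p : 'cV[R]_K) k := (V *m p) k 0 + z k 0.

Lemma SIRE p k : SIR V z p k = p k 0 / interf p k.
Proof. by []. Qed.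

Lemma interf_gt0 p k : nonneg p -> 0 < interf p k.
Proof. by move=> p_ge0; rewrite ltr_wpDl // mulmx_ge0. Qed.

(* Strict subhomogeneity: the noise does not scale with the powers. *)
Lemma interf_scale_lt c p k :
  1 < c -> nonneg p -> interf (c *: p) k < c * interf p k.
Proof.
move=> c_gt1 p_ge0; rewrite /interf -scalemxAr mxE mulrDr ltrD2l.
by rewrite ltr_pMl.
Qed.

Lemma SIR_scale_gt c p k :
  1 < c -> nonneg p -> 0 < p k 0 -> SIR V z p k < SIR V z (c *: p) k.
Proof.
move=> c_gt1 p_ge0 pk_gt0; have c_gt0 : 0 < c := lt_trans ltr01 c_gt1.
have cp_ge0 : nonneg (c *: p) by move=> j; rewrite mxE mulr_ge0 ?(ltW c_gt0).
rewrite !SIRE [_ (c *: p) k 0]mxE ltr_pdivlMr ?interf_gt0 //.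
rewrite mulrAC ltr_pdivrMr ?interf_gt0 // [c * _]mulrC -mulrA ltr_pM2l //.
exact: interf_scale_lt.
Qed.

Section Level.
Variable t : R.
Hypothesis t_gt0 : 0 < t.

Definition demand (p : 'cV[R]_K) : 'cV[R]_K :=
  \col_k (t * gamma k 0 * interf p k).

Lemma demandE p k : demand p k 0 = t * gamma k 0 * interf p k.
Proof. by rewrite mxE. Qed.

Lemma demand_gt0 p k : nonneg p -> 0 < demand p k 0.
Proof. by move=> p_ge0; rewrite demandE !mulr_gt0 ?interf_gt0. Qed.

Lemma SIR_ge_level p k : nonneg p ->
  (t <= SIR V z p k / gamma k 0) = (demand p k 0 <= p k 0).
Proof. by move=> p_ge0; rewrite ler_pdivlMr // ler_pdivlMr ?interf_gt0 // demandE. Qed.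

Lemma SIR_gt_level p k : nonneg p ->
  (t < SIR V z p k / gamma k 0) = (demand p k 0 < p k 0).
Proof. by move=> p_ge0; rewrite ltr_pdivlMr // ltr_pdivlMr ?interf_gt0 // demandE. Qed.

Lemma demand_le (p q : 'cV[R]_K) k :
  (forall j, p j 0 <= q j 0) -> demand p k 0 <= demand q k 0.
Proof.
move=> lepq; rewrite !demandE; apply: ler_wpM2l; first by rewrite mulr_ge0 // ltW.
by rewrite lerD2r mulmx_le.
Qed.

Lemma demand_lt (p q : 'cV[R]_K) k j : (forall j, p j 0 <= q j 0) ->
  p j 0 < q j 0 -> 0 < V k j -> demand p k 0 < demand q k 0.
Proof.
move=> lepq ltj Vkj; rewrite !demandE ltr_pM2l ?mulr_gt0 // /interf ltrD2r.
by rewrite (mulmx_lt V_ge0 lepq ltj).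
Qed.

Definition achieves p := nonneg p /\ forall j, demand p j 0 <= p j 0.

Definition strict_at p j := demand p j 0 < p j 0.

Definition relax (p : 'cV[R]_K) : 'cV[R]_K :=
  \col_k ((demand p k 0 + p k 0) / 2).

Lemma relaxE p k : relax p k 0 = (demand p k 0 + p k 0) / 2.
Proof. by rewrite [LHS]mxE. Qed.

Lemma relax_between p k : achieves p ->
  demand p k 0 <= relax p k 0 <= p k 0.
Proof. by case=> _ dem_le; rewrite relaxE !(midf_le (dem_le k)). Qed.

Lemma relax_le p : achieves p -> forall j, relax p j 0 <= p j 0.
Proof. by move=> ach j; case/andP: (relax_between j ach). Qed.

Lemma relax_achieves p : achieves p -> achieves (relax p).
Proof.
move=> ach; split=> j; have /andP[dem_le _] := relax_between j ach.
  by apply: le_trans dem_le; rewrite ltW // demand_gt0 //; case: ach.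
by apply: le_trans dem_le; apply: demand_le; apply: relax_le.
Qed.

Lemma relax_strict_at p k : achieves p -> strict_at p k -> strict_at (relax p) k.
Proof.
move=> ach ltk; apply: (le_lt_trans (demand_le k (relax_le ach))).
by rewrite relaxE (midf_lt ltk).
Qed.

Lemma relax_strict_edge p j k : achieves p -> strict_at p j -> 0 < V k j ->
  strict_at (relax p) k.
Proof.
move=> ach ltj Vkj; have /andP[dem_le _] := relax_between k ach.
apply: (lt_le_trans _ dem_le); apply: (demand_lt (relax_le ach) _ Vkj).
by rewrite relaxE (midf_lt ltj).
Qed.

Lemma iter_relax_achieves p m : achieves p -> achieves (iter m relax p).
Proof. by move=> ach; elim: m => //= m; apply: relax_achieves. Qed.

Lemma iter_relax_le p m : achieves p -> forall j, iter m relax p j 0 <= p j 0.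
Proof.
move=> ach; elim: m => [|m IHm] j //=.
exact: le_trans (relax_le (iter_relax_achieves m ach) j) (IHm j).
Qed.

Lemma iter_relax_strict_at p m n k : achieves p ->
  strict_at (iter m relax p) k -> strict_at (iter (n + m) relax p) k.
Proof.
move=> ach ltk; elim: n => //= n; apply: relax_strict_at.
exact: iter_relax_achieves.
Qed.

Lemma iter_relax_path p s x : achieves p ->
  path (fun a b => 0 < V a b) x s -> strict_at p (last x s) ->
  strict_at (iter (size s) relax p) x.
Proof.
move=> ach; elim: s x => [|y s IHs] x //= /andP[Vxy pth] lt_last.
by apply: (relax_strict_edge (iter_relax_achieves _ ach) (IHs y pth lt_last)).
Qed.

Lemma relax_strict_everywhere p j0 : irreducible V -> achieves p ->
  strict_at p j0 -> exists m, forall k, strict_at (iter m relax p) k.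
Proof.
move=> irr ach lt_j0.
have [len len_ok] : exists len : 'I_K -> nat,
    forall k, strict_at (iter (len k) relax p) k.
  apply: (@fin_all_exists _ (fun=> nat) (fun k m => strict_at (iter m relax p) k)).
  move=> k; have /connectP[s pth last_s] := irr k j0.
  by exists (size s); apply: iter_relax_path; rewrite // -last_s.
exists (\max_k len k)%N => k; rewrite -(subnK (@leq_bigmax _ len k)).
exact: iter_relax_strict_at.
Qed.

Definition balanced p := forall k, demand p k 0 = p k 0.

(* Two balanced vectors at the same level are ordered: the largest ratio
   c = p_k / q_k cannot exceed 1, by strict subhomogeneity. *)
Lemma balanced_le (p q : 'cV[R]_K) : (0 < K)%N -> nonneg q ->
  balanced p -> balanced q -> forall j, p j 0 <= q j 0.
Proof.
move=> K_gt0 q_ge0 bal_p bal_q.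
have q_gt0 j : 0 < q j 0 by rewrite -bal_q demand_gt0.
pose ratio j := p j 0 / q j 0.
have [k max_k] := maxI_attained ratio (Ordinal K_gt0); set c := maxI ratio in max_k *.
have le_ratio j : p j 0 <= c * q j 0 by rewrite -ler_pdivrMr // maxI_ge.
suff c_le1 : c <= 1.
  by move=> j; apply: (le_trans (le_ratio j)); rewrite ler_piMl // ltW.
rewrite leNgt; apply/negP => c_gt1.
have pk_eq : c * q k 0 = p k 0 by rewrite max_k divfK // gt_eqF.
have : p k 0 < p k 0; last by rewrite ltxx.
rewrite -[X in X < _]bal_p -[X in _ < X]pk_eq -bal_q.
apply: (le_lt_trans (demand_le k (q := c *: q) _)).
  by move=> j; rewrite mxE.
rewrite !demandE mulrCA ltr_pM2l ?mulr_gt0 //.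
exact: interf_scale_lt.
Qed.

Lemma balanced_unique (p q : 'cV[R]_K) : (0 < K)%N -> nonneg p -> nonneg q ->
  balanced p -> balanced q -> p = q.
Proof.
move=> K_gt0 p_ge0 q_ge0 bal_p bal_q; apply/matrixP => i j; rewrite (ord1 j).
by apply/le_anti; rewrite !balanced_le.
Qed.

Lemma balanced_SIR p k : nonneg p -> balanced p ->
  gamma k 0 / SIR V z p k = t^-1.
Proof.
move=> p_ge0 bal_p; rewrite SIRE -[p k 0]bal_p demandE mulfK ?gt_eqF ?interf_gt0 //.
by rewrite invfM mulrCA mulfV ?gt_eqF ?mulr1.
Qed.

End Level.
End Interference.

Section PowerControl.
Variables (R : rcfType) (K N : nat) (C : 'M[R]_(N, K)) (phat : 'cV[R]_N)
  (V : 'M[R]_K) (z gamma : 'cV[R]_K).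
Hypothesis C01 : forall n k, C n k = 0 \/ C n k = 1.
Hypothesis phat_gt0 : forall n, 0 < phat n 0.
Hypothesis V_ge0 : forall i j, 0 <= V i j.
Hypothesis z_gt0 : forall k, 0 < z k 0.
Hypothesis gamma_gt0 : forall k, 0 < gamma k 0.

Let obj := objective V z gamma.

Lemma C_ge0 n k : 0 <= C n k.
Proof. by case: (C01 n k) => ->. Qed.

Lemma feasible_le p q : feasible C phat p -> nonneg q ->
  (forall j, q j 0 <= p j 0) -> feasible C phat q.
Proof.
case=> _ Cp_le q_ge0 leqp; split=> // n.
exact: le_trans (mulmx_le C_ge0 n leqp) (Cp_le n).
Qed.

(* The equal-power vector min_n P_n / K is feasible and gives every link a
   positive SIR, so the optimal value is positive. *)
Lemma maximizer_objective_gt0 p (i0 : 'I_K) (n0 : 'I_N) :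
  maximizer C phat V z gamma p -> 0 < obj p.
Proof.
case=> _ p_max; pose d := minI (fun n => phat n 0) / K%:R.
have K_gt0 : 0 < K%:R :> R by rewrite ltr0n (leq_ltn_trans _ (ltn_ord i0)).
have d_gt0 : 0 < d by rewrite divr_gt0 // (minI_gt n0).
have q_feas : feasible C phat (const_mx d).
  split=> [j|n]; first by rewrite mxE ltW.
  apply: (le_trans _ (minI_le (fun n => phat n 0) n)); rewrite mxE.
  apply: (@le_trans _ _ (\sum_(k < K) d)).
    by apply: ler_sum => k _; rewrite mxE; case: (C01 n k) => ->;
      rewrite ?mul0r ?mul1r // ltW.
  by rewrite sumr_const card_ord -mulr_natr divfK ?gt_eqF.
apply: lt_le_trans (p_max _ q_feas); apply: (minI_gt i0) => k.
have q_ge0 : nonneg (const_mx d : 'cV[R]_K) by move=> j; rewrite mxE ltW.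
by rewrite SIRE mxE divr_gt0 // divr_gt0 // (interf_gt0 V_ge0 z_gt0).
Qed.

Lemma maximizer_achieves p :
  maximizer C phat V z gamma p -> achieves V z gamma (obj p) p.
Proof.
case=> [[p_ge0 _] _]; split=> // j.
by rewrite -SIR_ge_level // minI_le.
Qed.

Lemma maximizer_full_power p (i0 : 'I_K) (n0 : 'I_N) :
  maximizer C phat V z gamma p -> maxI (gfun C phat p) = 1.
Proof.
move=> p_max; have obj_gt0 := maximizer_objective_gt0 i0 n0 p_max.
have [p_ge0 dem_le] := maximizer_achieves p_max.
have p_gt0 k : 0 < p k 0 by apply: lt_le_trans (dem_le k); apply: demand_gt0.
case: p_max => [[_ Cp_le] p_max]; set M := maxI _.
have g_le_M n : (C *m p) n 0 <= M * phat n 0.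
  by rewrite -ler_pdivrMr // (maxI_ge (gfun C phat p)).
have M_ge0 : 0 <= M.
  apply: le_trans (maxI_ge _ n0).
  by rewrite divr_ge0 ?mulmx_ge0 ?ltW //; apply: C_ge0.
have M_le1 : M <= 1.
  have [n ->] : exists n, M = gfun C phat p n by apply: maxI_attained.
  by rewrite /gfun ler_pdivrMr ?mul1r.
apply/eqP; rewrite eq_le M_le1 leNgt; apply/negP => M_lt1.
have [c c_gt1 cM_le1] := expansion_factor M_ge0 M_lt1.
have c_ge0 : 0 <= c by rewrite ltW // (lt_trans ltr01).
have cp_feas : feasible C phat (c *: p).
  split=> [j|n]; first by rewrite mxE mulr_ge0.
  rewrite -scalemxAr mxE; apply: (le_trans (ler_wpM2l c_ge0 (g_le_M n))).
  by rewrite mulrA ler_piMl // ltW.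
have := p_max _ cp_feas; rewrite leNgt => /negP; apply.
apply: (minI_gt i0) => k; apply: le_lt_trans (minI_le _ k) _.
by rewrite ltr_pM2r ?invr_gt0 // SIR_scale_gt.
Qed.

(* Part (ii), first half: with V irreducible, a maximizer is balanced at its
   optimal value; otherwise iterated averaging would produce a feasible
   vector with a strictly larger objective. *)
Lemma maximizer_balanced p (i0 : 'I_K) (n0 : 'I_N) : irreducible V ->
  maximizer C phat V z gamma p -> balanced V z gamma (obj p) p.
Proof.
move=> irr p_max; have obj_gt0 := maximizer_objective_gt0 i0 n0 p_max.
have ach := maximizer_achieves p_max.
case: (boolP [exists j, strict_at V z gamma (obj p) p j]).
  case/existsP=> j0 lt_j0.
  have [m all_strict] :=
    relax_strict_everywhere V_ge0 z_gt0 gamma_gt0 obj_gt0 irr ach lt_j0.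
  have [q_ge0 _] := iter_relax_achieves V_ge0 z_gt0 gamma_gt0 obj_gt0 m ach.
  have q_feas : feasible C phat (iter m (relax V z gamma (obj p)) p).
    apply: feasible_le p_max.1 q_ge0 _.
    exact: (iter_relax_le V_ge0 z_gt0 gamma_gt0 obj_gt0 m ach).
  have := p_max.2 _ q_feas; rewrite leNgt => /negP; case.
  apply: (minI_gt i0) => k.
  by rewrite (SIR_gt_level V_ge0 z_gt0 gamma_gt0) //; apply: all_strict.
rewrite negb_exists => /forallP not_strict k; apply/eqP; rewrite eq_le ach.2.
by rewrite leNgt not_strict.
Qed.

Lemma maximizer_unique p q (i0 : 'I_K) (n0 : 'I_N) : irreducible V ->
  maximizer C phat V z gamma p -> maximizer C phat V z gamma q -> p = q.
Proof.
move=> irr p_max q_max.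
have obj_eq : obj q = obj p by apply/le_anti; rewrite p_max.2 ?q_max.2 //;
  [exact: p_max.1 | exact: q_max.1].
have bal_q := maximizer_balanced i0 n0 irr q_max; rewrite obj_eq in bal_q.
apply: (balanced_unique V_ge0 z_gt0 gamma_gt0 (maximizer_objective_gt0 i0 n0 p_max)
  (leq_ltn_trans (leq0n i0) (ltn_ord i0)) p_max.1.1 q_max.1.1
  (maximizer_balanced i0 n0 irr p_max) bal_q).
Qed.

End PowerControl.

(* K >= 2 provides a link i0, and the column of C at i0 a constraint n0;
   both only witness that the index types are nonempty. *)
Theorem lemma2 (R : rcfType) (K N : nat) (hK : (2 <= K)%N)
  (C : 'M[R]_(N, K)) (phat : 'cV[R]_N) (V : 'M[R]_K) (z gamma : 'cV[R]_K)
  (hC01 : forall n k, C n k = 0 \/ C n k = 1)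
  (hCcol : forall k, exists n, C n k = 1)
  (hphat : forall n, 0 < phat n 0)
  (hV : forall i j, 0 <= V i j)
  (hVdiag : forall i, V i i = 0)
  (hz : forall k, 0 < z k 0)
  (hgamma : forall k, 0 < gamma k 0)
  (pbar : 'cV[R]_K)
  (hmax : maximizer C phat V z gamma pbar) :
  maxI (fun n => gfun C phat pbar n) = 1 /\
  (irreducible V ->
     (forall p, maximizer C phat V z gamma p -> p = pbar) /\
     exists beta : R, 0 < beta /\
       forall k, gamma k 0 / SIR V z pbar k = beta).
Proof.
pose i0 : 'I_K := Ordinal (leq_trans (isT : (1 <= 2)%N) hK).
have [n0 _] := hCcol i0.
split; first exact: (maximizer_full_power hC01 hphat hV hz hgamma i0 n0 hmax).
move=> irr; split.
  move=> p p_max.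
  exact: (maximizer_unique hC01 hphat hV hz hgamma i0 n0 irr p_max hmax).
have obj_gt0 := maximizer_objective_gt0 hC01 hphat hV hz hgamma i0 n0 hmax.
exists (objective V z gamma pbar)^-1; split; first by rewrite invr_gt0.
move=> k; apply: (balanced_SIR hV hz hgamma k hmax.1.1).
exact: (maximizer_balanced hC01 hphat hV hz hgamma i0 n0 irr hmax).
Qed.
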